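(* Assume $M$ is a message set whose communication topology $G_M$ is an oriented ring, and let $S=(P_1,\dots,P_N)$ be a $1$-synchronizable $M$-system. Then for every $\tau\in T_\omega(S)$ there is a normalized trace $\tau_N\in T_\omega(S)$ such that $\tau\equiv_S\tau_N$.
   Context: A message set $M=(\Sigma_M,N,\mathrm{src},\mathrm{dst})$: finite set of messages, $N\ge1$ peers, $\mathrm{src}(a)\neq\mathrm{dst}(a)\in\{1,\dots,N\}$. Its communication topology $G_M$ is the directed graph on $\{1,\dots,N\}$ with an edge $i\to j$ iff some message $a$ has $\mathrm{src}(a)=i$, $\mathrm{dst}(a)=j$; $G_M$ is an oriented ring if its edge set is exactly $\{(i,j)\mid j=i+1 \bmod N\}$. Actions $!a$ (by peer $\mathrm{src}(a)$), $?a$ (by peer $\mathrm{dst}(a)$); traces are finite action sequences; $!?a$ abbreviates $!a\cdot?a$. For a trace $\tau$, $\pi_!(\tau)$ is the sequence of sent messages; $\mathrm{buf}_{i\to j}(\tau)$ is the word $w$ (if any) with (sent on $i\to j$) $=$ (received on $i\to j$)$\cdot w$. $\tau$ is FIFO ($k$-bounded FIFO) if for all $i,j$ and prefixes $\tau'$, $\mathrm{buf}_{i\to j}(\tau')$ is defined (and has length $\le k$); synchronous if of the form $!?a_1\cdots!?a_k$. A trace is normalized if it is of the form $\tau_0\cdot !a_1\cdots !a_n$ with $\tau_0$ synchronous, $n\ge0$, $a_1,\dots,a_n\in\Sigma_M$. A system $S=(P_1,\dots,P_N)$: finite automata $P_i$ (all states accepting) over actions of peer $i$, with one FIFO channel per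 ordered pair $i\neq j$. A configuration: one control state per peer and contents $w_{i,j}$ of channels; stable if all channels empty. $!a$ ($\mathrm{src}(a)=i,\mathrm{dst}(a)=j$) moves $P_i$ and appends $a$ to $w_{i,j}$; $?a$ moves $P_j$ and removes $a$ from the head of $w_{i,j}$; $c_0$ is the initial configuration. $T_k(S)$ ($k\ge1$): $k$-bounded FIFO traces $\tau$ with $c_0\xrightarrow{\tau}c$ for some $c$; $T_0(S)$: synchronous such traces; $T_\omega(S)=\bigcup_kT_k(S)$. $\tau_1\equiv_S\tau_2$ iff $\tau_1,\tau_2\in T_\omega(S)$ and there is $c$ with $c_0\xrightarrow{\tau_1}c$ and $c_0\xrightarrow{\tau_2}c$. $ST_k(S)=\{\pi_!(\tau)\mid\tau\in T_k(S)\}\cup\{(\pi_!(\tau),c)\mid c_0\xrightarrow{\tau}c,\ c\text{ stable},\ \tau\in T_k(S)\}$; $S$ is $1$-synchronizable if $ST_0(S)=ST_1(S)$. *)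

(* Communicating automata over FIFO channels (message sets,
   systems, k-bounded traces, 1-synchronizability). Peers are 0-indexed: 'I_N. *)
From mathcomp Require Import all_boot.
Set Implicit Arguments. Unset Strict Implicit. Unset Printing Implicit Defensive.

Record msgset := MsgSet {
  msg : finType;
  npeers : nat;
  npeers_pos : 0 < npeers;
  src : msg -> 'I_npeers;
  dst : msg -> 'I_npeers;
  src_neq_dst : forall a, src a != dst a }.

Definition topo_edge (M : msgset) (i j : 'I_(npeers M)) : Prop :=
  exists a : msg M, src a = i /\ dst a = j.

Definition oriented_ring (M : msgset) : Prop :=
  forall i j : 'I_(npeers M),
    topo_edge i j <-> val j = (val i).+1 %% npeers M.

Inductive action (M : msgset) := Snd of msg M | Rcv of msg M.
Arguments Snd {M}. Arguments Rcv {M}.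

(* A system S = (P_1..P_N): peer i is a finite automaton (all states accepting)
   with state set [state i], initial state [init i] and transition relation
   [trans i]; only transitions labelled by actions of peer i are ever used. *)
Record system (M : msgset) := System {
  state : 'I_(npeers M) -> finType;
  init : forall i, state i;
  trans : forall i, state i -> action M -> state i -> bool }.

Section Semantics.
Variables (M : msgset) (S : system M).
Local Notation N := (npeers M).
Local Notation peer := 'I_N.

Record config := Config {
  cst : forall i : peer, state S i;
  chan : peer -> peer -> seq (msg M) }.

Definition c0 : config := Config (@init M S) (fun _ _ => [::]).

Definition stable (c : config) : Prop := forall i j, chan c i j = [::].

Definition step (c : config) (x : action M) (c' : config) : Prop :=
  match x with
  | Snd a =>
      let i := src a in let j := dst a in
      [/\ trans (cst c i) x (cst c' i),
          (forall k, k != i -> cst c' k = cst c k),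
          chan c' i j = rcons (chan c i j) a &
          (forall p q, (p, q) != (i, j) -> chan c' p q = chan c p q)]
  | Rcv a =>
      let i := src a in let j := dst a in
      [/\ trans (cst c j) x (cst c' j),
          (forall k, k != j -> cst c' k = cst c k),
          chan c i j = a :: chan c' i j &
          (forall p q, (p, q) != (i, j) -> chan c' p q = chan c p q)]
  end.

Fixpoint reach (c : config) (tau : seq (action M)) (c' : config) : Prop :=
  match tau with
  | [::] => c' = c
  | x :: t => exists c1, step c x c1 /\ reach c1 t c'
  end.

Definition sent_msg (x : action M) : option (msg M) :=
  if x is Snd a then Some a else None.
Definition recv_msg (x : action M) : option (msg M) :=
  if x is Rcv a then Some a else None.

Definition proj_send (tau : seq (action M)) : seq (msg M) := pmap sent_msg tau.

Definition on_chan (i j : peer) (a : msg M) : bool := (src a == i) && (dst a == j).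

Definition sent_on i j tau := filter (on_chan i j) (pmap sent_msg tau).
Definition recv_on i j tau := filter (on_chan i j) (pmap recv_msg tau).

Definition buf (i j : peer) tau (w : seq (msg M)) : Prop :=
  sent_on i j tau = recv_on i j tau ++ w.

Definition fifo (tau : seq (action M)) : Prop :=
  forall n i j, exists w, buf i j (take n tau) w.

Definition kfifo (k : nat) (tau : seq (action M)) : Prop :=
  forall n i j, exists w, buf i j (take n tau) w /\ size w <= k.

Definition synchronous (tau : seq (action M)) : Prop :=
  exists s : seq (msg M), tau = flatten [seq [:: Snd a; Rcv a] | a <- s].

Definition normalized (tau : seq (action M)) : Prop :=
  exists tau0 s, synchronous tau0 /\ tau = tau0 ++ [seq Snd a | a <- s].

Definition executable (tau : seq (action M)) : Prop := exists c, reach c0 tau c.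

Definition Tk (k : nat) (tau : seq (action M)) : Prop :=
  (if k is 0 then synchronous tau else kfifo k tau) /\ executable tau.

Definition Tomega (tau : seq (action M)) : Prop := exists k, 0 < k /\ Tk k tau.

Definition equivS (tau1 tau2 : seq (action M)) : Prop :=
  [/\ Tomega tau1, Tomega tau2 & exists c, reach c0 tau1 c /\ reach c0 tau2 c].

(* ST_k(S) = {pi_!(tau)} U {(pi_!(tau), c) | c stable}; the two kinds of elements
   are represented by two predicates. *)
Definition ST_seq (k : nat) (w : seq (msg M)) : Prop :=
  exists tau, Tk k tau /\ proj_send tau = w.
Definition ST_conf (k : nat) (w : seq (msg M)) (c : config) : Prop :=
  exists tau, [/\ Tk k tau, proj_send tau = w, reach c0 tau c & stable c].

Definition one_synchronizable : Prop :=
  (forall w, ST_seq 0 w <-> ST_seq 1 w) /\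
  (forall w c, ST_conf 0 w c <-> ST_conf 1 w c).

End Semantics.

From mathcomp Require Import all_boot.
From Stdlib Require Import ChoiceFacts IndefiniteDescription FunctionalExtensionality.

Set Implicit Arguments. Unset Strict Implicit. Unset Printing Implicit Defensive.

(* Induct on the trace, keeping a normalized trace !?s.!w that reaches the same
   configuration.  A send is appended to w.  A receive ?a consumes the head of its
   channel, so w = w1.a.w2 with no message of w1 on that channel; on a ring each peer
   has a single outgoing channel, so w1 has no send of src a at all and !a can move
   into the synchronous prefix as !?a.  Only the local run of q = dst a changes: its
   pending sends !wq must now follow ?a instead of preceding it, and this swap is what
   1-synchronizability provides.  Along the prefixes u.b of wq, the trace
   !?s.!a.!?u.!b is 1-bounded and executable (q runs a prefix of its old run, the other
   peers run as in !?s.!?a.!?u), hence so is its synchronous counterpart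
   !?s.!?a.!?u.!?b.  Finally !?s.!a.!?wq.?a is 1-bounded and ends in a stable
   configuration, which the synchronous trace !?s.!?a.!?wq with the same sends must
   then also reach; there q has run ?a.!wq. *)

Lemma catI (T : Type) : right_injective (@cat T).
Proof. by move=> s t u /(congr1 (drop (size s))); rewrite !drop_size_cat. Qed.

Lemma filter_cat_cons_swap (T : Type) (P : pred T) (w1 w2 : seq T) a :
  (P a -> filter P w1 = [::]) ->
  filter P (w1 ++ a :: w2) = filter P [:: a] ++ filter P (w1 ++ w2).
Proof. by move=> Hw1; rewrite !filter_cat /=; case: ifP => // /Hw1 ->. Qed.

Lemma filter_cons_split (T : Type) (P : pred T) w a r :
  filter P w = a :: r -> exists w1 w2, w = w1 ++ a :: w2 /\ filter P w1 = [::].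
Proof.
elim: w => //= x w IH; case: ifP => Px; first by case=> <- _; exists [::], w.
by case/IH=> w1 [w2 [-> Hw1]]; exists (x :: w1), w2; rewrite /= Px.
Qed.

Section Traces.
Variable M : msgset.
Local Notation peer := 'I_(npeers M).
Local Notation act := (action M).
Implicit Types (i j : peer) (a b : msg M) (s u w : seq (msg M)) (x : act) (t : seq act).

Definition actor x : peer := match x with Snd a => src a | Rcv a => dst a end.
Definition amsg x : msg M := match x with Snd a => a | Rcv a => a end.
Definition lproj i t : seq act := [seq x <- t | actor x == i].
Definition sync_trace s : seq act := flatten [seq [:: Snd a; Rcv a] | a <- s].
Definition sends s : seq act := [seq Snd a | a <- s].

Lemma sync_trace_cons a s : sync_trace (a :: s) = Snd a :: Rcv a :: sync_trace s.
Proof. by []. Qed.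

Lemma sync_trace_cat s u : sync_trace (s ++ u) = sync_trace s ++ sync_trace u.
Proof. by rewrite /sync_trace map_cat flatten_cat. Qed.

Lemma proj_send_cat t t' : proj_send (t ++ t') = proj_send t ++ proj_send t'.
Proof. exact: pmap_cat. Qed.

Lemma proj_send_sync s : proj_send (sync_trace s) = s.
Proof. by elim: s => // a s IH; rewrite sync_trace_cons /= IH. Qed.

Lemma proj_send_sends s : proj_send (sends s) = s.
Proof. by elim: s => //= a s ->. Qed.

Lemma synchronous_sync t : synchronous t -> t = sync_trace (proj_send t).
Proof. by case=> s ->; rewrite proj_send_sync. Qed.

Lemma lproj_cat i t t' : lproj i (t ++ t') = lproj i t ++ lproj i t'.
Proof. exact: filter_cat. Qed.

Lemma lproj_cons i x t :
  lproj i (x :: t) = if actor x == i then x :: lproj i t else lproj i t.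
Proof. by []. Qed.

Lemma lproj_sends i s : lproj i (sends s) = sends [seq a <- s | src a == i].
Proof. by rewrite /lproj /sends filter_map. Qed.

Lemma lproj_sync_from i s :
  all (fun a => src a == i) s -> lproj i (sync_trace s) = sends s.
Proof.
elim: s => // a s IH /andP[/eqP Ha Hs].
have Hd : (dst a == i) = false by rewrite -Ha eq_sym (negbTE (src_neq_dst a)).
by rewrite sync_trace_cons !lproj_cons /= Ha eqxx Hd IH.
Qed.

Lemma lproj_sync_rcv_other i s a u : dst a != i ->
  lproj i (sync_trace (s ++ a :: u)) = lproj i (sync_trace s ++ Snd a :: sync_trace u).
Proof.
by move=> /negbTE Hi; rewrite sync_trace_cat sync_trace_cons !lproj_cat !lproj_cons /= Hi.
Qed.

Lemma sent_on_cat i j t t' : sent_on i j (t ++ t') = sent_on i j t ++ sent_on i j t'.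
Proof. by rewrite /sent_on pmap_cat filter_cat. Qed.

Lemma recv_on_cat i j t t' : recv_on i j (t ++ t') = recv_on i j t ++ recv_on i j t'.
Proof. by rewrite /recv_on pmap_cat filter_cat. Qed.

Lemma sent_on_Snd i j a : sent_on i j [:: Snd a] = filter (on_chan i j) [:: a].
Proof. by []. Qed.
Lemma recv_on_Snd i j a : recv_on i j [:: Snd a] = [::].
Proof. by []. Qed.
Lemma sent_on_Rcv i j a : sent_on i j [:: Rcv a] = [::].
Proof. by []. Qed.
Lemma recv_on_Rcv i j a : recv_on i j [:: Rcv a] = filter (on_chan i j) [:: a].
Proof. by []. Qed.

Lemma sent_on_sync i j s : sent_on i j (sync_trace s) = filter (on_chan i j) s.
Proof. by rewrite /sent_on -/(proj_send _) proj_send_sync. Qed.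

Lemma recv_on_sync i j s : recv_on i j (sync_trace s) = filter (on_chan i j) s.
Proof. by elim: s => // a s IH; rewrite sync_trace_cons /recv_on /= -/(recv_on i j _) IH. Qed.

Lemma sent_on_sends i j s : sent_on i j (sends s) = filter (on_chan i j) s.
Proof. by rewrite /sent_on -/(proj_send _) proj_send_sends. Qed.

Lemma recv_on_sends i j s : recv_on i j (sends s) = [::].
Proof. by elim: s. Qed.

Lemma size_sent_on i j t : size (sent_on i j t) <= size t.
Proof.
rewrite /sent_on size_filter; apply: leq_trans (count_size _ _) _.
by rewrite size_pmap count_size.
Qed.

Lemma on_chanE i j a : on_chan i j a = ((src a, dst a) == (i, j)).
Proof. by rewrite /on_chan xpair_eqE. Qed.

Lemma buf_uniq i j t w w' : buf i j t w -> buf i j t w' -> w = w'.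
Proof. by rewrite /buf => -> /catI. Qed.

Definition buffer i j t := drop (size (recv_on i j t)) (sent_on i j t).

Lemma fifo_buffer i j t : fifo t -> buf i j t (buffer i j t).
Proof.
move=> /(_ (size t) i j) [w]; rewrite take_size /buf /buffer => ->.
by rewrite drop_size_cat.
Qed.

Lemma buf_sync_cat i j s t w : buf i j (sync_trace s ++ t) w <-> buf i j t w.
Proof.
rewrite /buf sent_on_cat recv_on_cat sent_on_sync recv_on_sync -catA.
by split=> [/catI | ->].
Qed.

Lemma buf_sends i j s w : buf i j (sends s) w <-> w = filter (on_chan i j) s.
Proof. by rewrite /buf sent_on_sends recv_on_sends; split=> ->. Qed.

Lemma buf_rcons i j t x w w' : buf i j t w ->
  buf i j (rcons t x) w' <-> recv_on i j [:: x] ++ w' = w ++ sent_on i j [:: x].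
Proof.
rewrite /buf -cats1 sent_on_cat recv_on_cat => ->; rewrite -!catA.
by split=> [/catI -> | ->].
Qed.

Lemma fifo_rcons t x :
  fifo (rcons t x) <-> fifo t /\ forall i j, exists w, buf i j (rcons t x) w.
Proof.
split=> [Hf | [Hf Hx] n i j].
  split=> [n i j | i j]; last by have := Hf (size t).+1 i j; rewrite take_oversize ?size_rcons.
  case: (leqP n (size t)) => Hn; first by have := Hf n i j; rewrite -cats1 takel_cat.
  by rewrite take_oversize ?(ltnW Hn) //; have := Hf (size t) i j; rewrite -cats1 take_size_cat.
case: (leqP n (size t)) => Hn; first by rewrite -cats1 takel_cat //; apply: Hf.
by rewrite take_oversize ?size_rcons //; apply: Hx.
Qed.

Lemma kfifo_rcons k t x : kfifo k t ->
  (forall i j, exists w, buf i j (rcons t x) w /\ size w <= k) -> kfifo k (rcons t x).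
Proof.
move=> Hk Hx n i j; case: (leqP n (size t)) => Hn.
  by rewrite -cats1 takel_cat //; apply: Hk.
by rewrite take_oversize ?size_rcons //; apply: Hx.
Qed.

Lemma kfifo_nil k : kfifo k ([::] : seq act).
Proof. by move=> n i j; exists [::]. Qed.

Lemma kfifo_fifo k t : kfifo k t -> fifo t.
Proof. by move=> Hk n i j; have [w [Hw _]] := Hk n i j; exists w. Qed.

Lemma fifo_kfifo t : fifo t -> kfifo (size t).+1 t.
Proof.
move=> Hf n i j; have [w Hw] := Hf n i j; exists w; split=> //.
apply: leq_trans (leq_addl (size (recv_on i j (take n t))) _) _.
rewrite -size_cat -Hw; apply: leq_trans (size_sent_on _ _ _) _.
by rewrite size_take_min (leq_trans (geq_minr _ _) (leqnSn _)).
Qed.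

Lemma kfifo_sync_cat k s t : 0 < k -> kfifo k t -> kfifo k (sync_trace s ++ t).
Proof.
move=> Hk Ht; elim: s => // a s IH [|[|n]] i j /=; first by exists [::].
  by exists (filter (on_chan i j) [:: a]); split=> //=; case: ifP.
have [w [Hw Hsz]] := IH n i j; exists w; split=> //.
exact: (buf_sync_cat i j [:: a] (take n (sync_trace s ++ t)) w).2.
Qed.

Lemma fifo_sync_cat s t : fifo t -> fifo (sync_trace s ++ t).
Proof. by move/fifo_kfifo/(kfifo_sync_cat s (ltn0Sn _))/kfifo_fifo. Qed.

Lemma fifo_sends s : fifo (sends s).
Proof.
move=> n i j; exists (filter (on_chan i j) (take n s)).
by rewrite /sends -map_take; apply/buf_sends.
Qed.

Lemma off_chan_nil i j t : all (fun x => ~~ on_chan i j (amsg x)) t ->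
  sent_on i j t = [::] /\ recv_on i j t = [::].
Proof.
elim: t => // x t IH /andP[Hx /IH[Hs Hr]].
rewrite -cat1s sent_on_cat recv_on_cat Hs Hr.
by case: x Hx => b /= /negbTE Hb; rewrite ?sent_on_Snd ?recv_on_Rcv /= Hb.
Qed.

Lemma kfifo_snd a t : all (fun x => ~~ on_chan (src a) (dst a) (amsg x)) t ->
  kfifo 1 t -> kfifo 1 (Snd a :: t).
Proof.
move=> Hoff Hk [|n] i j /=; first by exists [::].
have [w [Hw Hsz]] := Hk n i j.
rewrite /buf -cat1s sent_on_cat recv_on_cat sent_on_Snd recv_on_Snd /=.
case Ha: (on_chan i j a) => /=; last by exists w.
have [Hs Hr] : sent_on i j (take n t) = [::] /\ recv_on i j (take n t) = [::].
  move: Ha; rewrite /on_chan => /andP[/eqP <- /eqP <-]; apply: off_chan_nil.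
  by move: Hoff; rewrite -{1}(cat_take_drop n t) all_cat => /andP[].
by exists [:: a]; rewrite Hs Hr.
Qed.

Lemma all_amsg_sync (P : pred (msg M)) s :
  all (fun x => P (amsg x)) (sync_trace s) = all P s.
Proof. by elim: s => // a s IH; rewrite sync_trace_cons /= IH andbA andbb. Qed.

End Traces.

Section Runs.
Variables (M : msgset) (S : system M).
Local Notation peer := 'I_(npeers M).
Local Notation act := (action M).
Implicit Types (i j : peer) (x : act) (t : seq act) (c : config S).

Fixpoint lrun i (p : state S i) (u : seq act) (p' : state S i) : Prop :=
  if u is x :: u' then exists2 r, trans p x r & lrun r u' p' else p' = p.

Lemma lrun_cat i (p p' : state S i) u v :
  lrun p (u ++ v) p' <-> exists2 r, lrun p u r & lrun r v p'.
Proof.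
elim: u p => [|x u IH] p /=; first by split=> [|[r ->]]; [exists p|].
split=> [[r Hx /IH[r' Hu Hv]] | [r' [r Hx Hu] Hv]]; first by exists r' => //; exists r.
by exists r => //; apply/IH; exists r'.
Qed.

Lemma lrun_catl i (p p' : state S i) u v : lrun p (u ++ v) p' -> exists r, lrun p u r.
Proof. by case/lrun_cat=> r Hu _; exists r. Qed.

Lemma lrun_rcons i (p p' : state S i) u x :
  lrun p (rcons u x) p' <-> exists2 r, lrun p u r & trans r x p'.
Proof.
rewrite -cats1 lrun_cat; split=> [[r Hu [r' Hx ->]] | [r Hu Hx]]; first by exists r.
by exists r => //; exists p'.
Qed.

Lemma reach_rcons c c' t x :
  reach c (rcons t x) c' <-> exists2 c1, reach c t c1 & step c1 x c'.
Proof.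
elim: t c => [|y t IH] c /=.
  by split=> [[c1 [Hx ->]] | [c1 -> Hx]]; [exists c | exists c'].
split=> [[c1 [Hy /IH[c2 Ht Hx]]] | [c2 [c1 [Hy Ht]] Hx]]; first by exists c2 => //; exists c1.
by exists c1; split=> //; apply/IH; exists c2.
Qed.

Lemma stepP c x c' : step c x c' <->
  [/\ trans (cst c (actor x)) x (cst c' (actor x)),
      forall k, k != actor x -> cst c' k = cst c k &
      forall i j, recv_on i j [:: x] ++ chan c' i j = chan c i j ++ sent_on i j [:: x]].
Proof.
case: x => a; rewrite /step /=; split=> [[Ht Hk Ha Ho] | [Ht Hk Hch]].
- split=> // i j; rewrite sent_on_Snd /= on_chanE.
  case: eqP => [[<- <-] | /eqP Hne]; first by rewrite Ha cats1.
  by rewrite Ho ?cats0 // eq_sym.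
- split=> // [|p q Hpq].
    by have := Hch (src a) (dst a); rewrite sent_on_Snd /= /on_chan !eqxx cats1.
  by have := Hch p q; rewrite sent_on_Snd /= on_chanE eq_sym (negbTE Hpq) cats0.
- split=> // i j; rewrite recv_on_Rcv /= on_chanE cats0.
  case: eqP => [[<- <-] | /eqP Hne] //.
  by rewrite Ho // eq_sym.
- split=> // [|p q Hpq].
    by have := Hch (src a) (dst a); rewrite recv_on_Rcv /= /on_chan !eqxx cats0.
  by have := Hch p q; rewrite recv_on_Rcv /= on_chanE eq_sym (negbTE Hpq) cats0.
Qed.

Lemma reach_c0_sound t c : reach (c0 S) t c ->
  [/\ fifo t, forall i, lrun (init S i) (lproj i t) (cst c i)
    & forall i j, buf i j t (chan c i j)].
Proof.
elim/last_ind: t c => [|t x IH] c; first by move=> /= ->; split=> // n i j; exists [::].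
case/reach_rcons=> c1 /IH[Hf Hl Hb] /stepP[Hx Hk Hch].
have Hb' i j : buf i j (rcons t x) (chan c i j) by apply/(buf_rcons _ _ (Hb i j)).
split=> // [|i]; first by apply/fifo_rcons; split=> // i j; exists (chan c i j).
rewrite /lproj filter_rcons -/(lproj i t); case: eqP => [<- | /eqP Hi].
  by apply/lrun_rcons; exists (cst c1 (actor x)).
by rewrite Hk 1?eq_sym.
Qed.

Lemma reach_c0_complete t c : fifo t ->
  (forall i, lrun (init S i) (lproj i t) (cst c i)) ->
  (forall i j, buf i j t (chan c i j)) -> reach (c0 S) t c.
Proof.
elim/last_ind: t c => [|t x IH] c Hf Hl Hb.
  case: c Hl Hb => f ch /= Hl Hb; rewrite /c0; congr Config.
    exact: functional_extensionality_dep.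
  by do 2!apply: functional_extensionality => ?; symmetry; apply: Hb.
case/fifo_rcons: Hf => Hf _.
have := Hl (actor x); rewrite /lproj filter_rcons eqxx -/(lproj _ t).
case/lrun_rcons=> r Hr Hx.
apply/reach_rcons; exists (Config (dfwith (cst c) r) (fun i j => buffer i j t)).
  apply: IH => // [i | i j]; last exact: fifo_buffer.
  case: (eqVneq (actor x) i) => [<- | Hi] /=; first by rewrite dfwith_in.
  by rewrite dfwith_out //; have := Hl i; rewrite /lproj filter_rcons (negbTE Hi).
apply/stepP; split=> /= [|k Hk | i j]; first by rewrite dfwith_in.
  by rewrite dfwith_out // eq_sym.
exact/(buf_rcons _ _ (fifo_buffer i j Hf)).
Qed.

Lemma reach_of_runs t i0 (p0 : state S i0) : fifo t ->
  (forall i, exists p, lrun (init S i) (lproj i t) p) ->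
  lrun (init S i0) (lproj i0 t) p0 -> exists2 c, reach (c0 S) t c & cst c i0 = p0.
Proof.
move=> Hf Hruns H0.
have [f Hl] := non_dep_dep_functional_choice functional_choice (state S)
  (fun i p => lrun (init S i) (lproj i t) p) Hruns.
exists (Config (dfwith f p0) (fun i j => buffer i j t)); last exact: dfwith_in.
apply: reach_c0_complete => // [i | i j]; last exact: fifo_buffer.
by case: (eqVneq i0 i) => [<- | Hi] /=; rewrite ?dfwith_in ?dfwith_out.
Qed.

Lemma Tomega_of_reach t c : reach (c0 S) t c -> Tomega S t.
Proof.
move=> Hc; exists (size t).+1; split=> //; split; last by exists c.
by case/reach_c0_sound: Hc => /fifo_kfifo.
Qed.

End Runs.

Section OneSynchronizable.
Variables (M : msgset) (S : system M).
Hypothesis sync1 : one_synchronizable S.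
Implicit Types (t : seq (action M)) (c : config S).

Lemma sync_reachable_of_1bounded t c : kfifo 1 t -> reach (c0 S) t c ->
  exists c', reach (c0 S) (sync_trace (proj_send t)) c'.
Proof.
move=> Hk Hc; have : ST_seq S 1 (proj_send t) by exists t; split=> //; split=> //; exists c.
by case/(sync1.1 _) => t0 [[/synchronous_sync Ht0 [c' Hc']] <-]; exists c'; rewrite -Ht0.
Qed.

Lemma sync_reach_of_1bounded_stable t c : kfifo 1 t -> reach (c0 S) t c -> stable c ->
  reach (c0 S) (sync_trace (proj_send t)) c.
Proof.
move=> Hk Hc Hs; have : ST_conf 1 (proj_send t) c.
  by exists t; split=> //; split=> //; exists c.
by case/(sync1.2 _ _) => t0 [[/synchronous_sync Ht0 _] <- Hc0 _]; rewrite -Ht0.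
Qed.

End OneSynchronizable.

Section Swap.
Variables (M : msgset) (S : system M).
Hypothesis sync1 : one_synchronizable S.
Variables (s w : seq (msg M)) (a : msg M) (y : state S (dst a)).
Local Notation q := (dst a).
Local Notation wq := [seq m <- w | src m == q].
Hypothesis others_run : forall i, i != q ->
  exists p, lrun (init S i) (lproj i (sync_trace (rcons s a))) p.
Hypothesis q_run : lrun (init S q) (lproj q (sync_trace s ++ sends w ++ [:: Rcv a])) y.

Let src_a_neq_q : (src a == q) = false.
Proof. exact/negbTE/src_neq_dst. Qed.

Let off_chan_from_q m : src m == q -> ~~ on_chan (src a) q m.
Proof. by move=> /eqP Hm; rewrite /on_chan Hm eq_sym src_a_neq_q. Qed.

Let wq_from_q : all (fun m => src m == q) wq.
Proof. exact: filter_all. Qed.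

Let wq_off_chan : all (fun m => ~~ on_chan (src a) q m) wq.
Proof. exact: (sub_all off_chan_from_q wq_from_q). Qed.

Let q_run_sends : lrun (init S q) (lproj q (sync_trace s) ++ sends wq ++ [:: Rcv a]) y.
Proof. by move: q_run; rewrite !lproj_cat lproj_sends /= eqxx. Qed.

Lemma sync_prefix_runs u v : wq = u ++ v -> forall i, i != q ->
  exists p, lrun (init S i) (lproj i (sync_trace (s ++ a :: u))) p.
Proof.
elim/last_ind: u v => [|u b IH] v Ewq i Hi; first by rewrite cats1; exact: others_run.
have : all (fun m => src m == q) (rcons u b ++ v) by rewrite -Ewq filter_all.
rewrite all_cat all_rcons => /andP[/andP[/eqP Hb Hu] _].
pose X := sync_trace s ++ Snd a :: sync_trace u ++ [:: Snd b].
have HX : kfifo 1 X.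
  apply: kfifo_sync_cat => //; apply: kfifo_snd.
    rewrite all_cat (all_amsg_sync (fun m => ~~ on_chan (src a) q m)).
    by rewrite (sub_all off_chan_from_q Hu) /= off_chan_from_q // Hb.
  by apply: kfifo_sync_cat => //; apply: kfifo_snd => //; apply: kfifo_nil.
have lproj_X_other i' : i' != q -> lproj i' X = lproj i' (sync_trace (s ++ a :: u)).
  move=> Hi'; rewrite lproj_sync_rcv_other 1?eq_sym // /X -cat_cons catA lproj_cat.
  by rewrite lproj_cons /= Hb eq_sym (negbTE Hi') cats0.
have [pq Hpq] : exists p, lrun (init S q) (lproj q X) p.
  have -> : lproj q X = lproj q (sync_trace s) ++ sends (rcons u b).
    rewrite /X lproj_cat lproj_cons /= src_a_neq_q lproj_cat (lproj_sync_from Hu).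
    by rewrite lproj_cons /= Hb eqxx /sends map_rcons cats1.
  by move: q_run_sends; rewrite Ewq /sends map_cat -catA catA => /lrun_catl.
have [cX HcX _] : exists2 c, reach (c0 S) X c & cst c q = pq.
  apply: (reach_of_runs (kfifo_fifo HX) _ Hpq) => i'.
  case: (eqVneq i' q) => [-> | Hi']; first by exists pq.
  by rewrite lproj_X_other //; apply: IH (b :: v) _ i' Hi'; rewrite Ewq cat_rcons.
have [c' Hc'] := sync_reachable_of_1bounded sync1 HX HcX.
case/reach_c0_sound: Hc' => _ Hl _; exists (cst c' i); move: (Hl i).
by rewrite /X proj_send_cat proj_send_sync -cat1s !proj_send_cat proj_send_sync cats1.
Qed.

Lemma swap_recv : lrun (init S q) (lproj q (sync_trace (rcons s a) ++ sends w)) y.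
Proof.
pose Y := rcons (sync_trace s ++ Snd a :: sync_trace wq) (Rcv a).
have wq_off : filter (on_chan (src a) q) wq = [::].
  by rewrite (eq_in_filter (a2 := pred0)) ?filter_pred0 // => m /(allP wq_off_chan)/negbTE.
have Y_empty i j : buf i j Y [::].
  rewrite /Y rcons_cat; apply/buf_sync_cat; rewrite /buf cats0 -cats1 -cat1s -catA.
  rewrite !sent_on_cat !recv_on_cat.
  rewrite sent_on_Snd recv_on_Snd sent_on_sync recv_on_sync sent_on_Rcv recv_on_Rcv cats0 /=.
  case: ifP => [|_]; last by rewrite cats0.
  by rewrite /on_chan => /andP[/eqP <- /eqP <-]; rewrite wq_off.
have HY : kfifo 1 Y.
  apply: kfifo_rcons => [|i j]; last by exists [::].
  apply: kfifo_sync_cat => //; apply: kfifo_snd.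
    by rewrite (all_amsg_sync (fun m => ~~ on_chan (src a) q m)); exact: wq_off_chan.
  by rewrite -(cats0 (sync_trace wq)); apply: kfifo_sync_cat => //; apply: kfifo_nil.
have lproj_Y_q : lproj q Y = lproj q (sync_trace s) ++ sends wq ++ [:: Rcv a].
  rewrite /Y -cats1 !lproj_cat -catA !lproj_cons /= src_a_neq_q eqxx.
  by rewrite (lproj_sync_from wq_from_q).
have [cY HcY HcYq] : exists2 c, reach (c0 S) Y c & cst c q = y.
  apply: (reach_of_runs (kfifo_fifo HY)); last by rewrite lproj_Y_q.
  move=> i; case: (eqVneq i q) => [-> | Hi]; first by exists y; rewrite lproj_Y_q.
  have [|p Hp] := sync_prefix_runs (u := wq) (v := [::]) _ Hi; first by rewrite cats0.
  have Hqi : (q == i) = false by rewrite eq_sym (negbTE Hi).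
  exists p; rewrite /Y -cats1 [lproj i (_ ++ [:: _])]lproj_cat lproj_cons /= Hqi cats0.
  by rewrite -lproj_sync_rcv_other ?Hqi.
have stable_cY : stable cY.
  by move=> i j; case/reach_c0_sound: HcY => _ _ /(_ i j) /buf_uniq; apply.
have := sync_reach_of_1bounded_stable sync1 HY HcY stable_cY.
have -> : proj_send Y = rcons s a ++ wq.
  by rewrite /Y -cats1 -cat1s !proj_send_cat !proj_send_sync cats0 cat_rcons.
case/reach_c0_sound=> _ /(_ q) + _; rewrite HcYq sync_trace_cat lproj_cat.
by rewrite (lproj_sync_from wq_from_q) lproj_cat lproj_sends.
Qed.

End Swap.

Section Normalization.
Variables (M : msgset) (S : system M).
Hypothesis dst_of_src : forall m m' : msg M, src m = src m' -> dst m = dst m'.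
Hypothesis sync1 : one_synchronizable S.

Lemma reach_normal_recv s w c c' a :
  reach (c0 S) (sync_trace s ++ sends w) c -> step c (Rcv a) c' ->
  exists w', reach (c0 S) (sync_trace (rcons s a) ++ sends w') c'.
Proof.
move=> /reach_c0_sound[_ Hl Hb] /stepP[/= Hx Hk Hch].
have chan_c i j : chan c i j = filter (on_chan i j) w.
  by apply/buf_sends/buf_sync_cat; apply: Hb.
have [w1 [w2 [Ew Hw1]]] : exists w1 w2,
    w = w1 ++ a :: w2 /\ filter (on_chan (src a) (dst a)) w1 = [::].
  apply: (@filter_cons_split _ _ _ _ (chan c' (src a) (dst a))); rewrite -chan_c.
  by have := Hch (src a) (dst a); rewrite recv_on_Rcv sent_on_Rcv /= /on_chan !eqxx cats0.
exists (w1 ++ w2).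
have chan_swap i j :
    filter (on_chan i j) w = filter (on_chan i j) [:: a] ++ filter (on_chan i j) (w1 ++ w2).
  by rewrite Ew; apply: filter_cat_cons_swap; rewrite /on_chan => /andP[/eqP <- /eqP <-].
have src_swap i : [seq m <- w | src m == i] =
    [seq m <- [:: a] | src m == i] ++ [seq m <- w1 ++ w2 | src m == i].
  rewrite Ew; apply: filter_cat_cons_swap => /eqP <-; rewrite -Hw1; apply: eq_filter => m.
  by rewrite /on_chan; case: eqP => //= /dst_of_src ->; rewrite eqxx.
have old_run i :
    lrun (init S i) (lproj i (sync_trace s ++ Snd a :: sends (w1 ++ w2))) (cst c i).
  move: (Hl i); rewrite !lproj_cat lproj_cons !lproj_sends src_swap /=.
  by case: (src a == i).
have new_run_other i : i != dst a ->
    lrun (init S i) (lproj i (sync_trace (rcons s a) ++ sends (w1 ++ w2))) (cst c' i).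
  move=> Hi; have Hai : (dst a == i) = false by rewrite eq_sym (negbTE Hi).
  rewrite Hk // -cats1 sync_trace_cat -catA.
  by move: (old_run i); rewrite !lproj_cat /= Hai; case: (src a == i).
apply: reach_c0_complete => [|i|i j].
- by apply: fifo_sync_cat; apply: fifo_sends.
- case: (eqVneq i (dst a)) => [-> | Hi]; last exact: new_run_other.
  apply: swap_recv => // [k Hk' |].
    by have := new_run_other k Hk'; rewrite lproj_cat => /lrun_catl.
  have -> : lproj (dst a) (sync_trace s ++ sends (w1 ++ w2) ++ [:: Rcv a]) =
      rcons (lproj (dst a) (sync_trace s ++ Snd a :: sends (w1 ++ w2))) (Rcv a).
    by rewrite !lproj_cat !lproj_cons /= (negbTE (src_neq_dst a)) eqxx rcons_cat cats1.
  by apply/lrun_rcons; exists (cst c (dst a)).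
- apply/buf_sync_cat/buf_sends; apply: (@catI _ (filter (on_chan i j) [:: a])).
  by rewrite -chan_swap -chan_c -recv_on_Rcv Hch sent_on_Rcv cats0.
Qed.

Lemma reach_normal t c :
  reach (c0 S) t c -> exists s w, reach (c0 S) (sync_trace s ++ sends w) c.
Proof.
elim/last_ind: t c => [|t x IH] c; first by exists [::], [::].
case/reach_rcons=> c1 /IH[s [w Hn]] Hx; case: x Hx => a Hx.
  exists s, (rcons w a); rewrite /sends map_rcons -rcons_cat.
  by apply/reach_rcons; exists c1.
by have [w' Hw'] := reach_normal_recv Hn Hx; exists (rcons s a), w'.
Qed.

End Normalization.

Lemma oriented_ring_dst_of_src (M : msgset) : oriented_ring M ->
  forall m m' : msg M, src m = src m' -> dst m = dst m'.
Proof.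
move=> ringM m m' Hs; apply: val_inj.
have edge (b : msg M) : val (dst b) = (val (src b)).+1 %% npeers M.
  by apply/(ringM (src b) (dst b)); exists b.
by rewrite !edge Hs.
Qed.

Theorem lemma4p11 (M : msgset) (S : system M) :
  oriented_ring M ->
  one_synchronizable S ->
  forall tau : seq (action M), Tomega S tau ->
  exists tauN : seq (action M),
    normalized tauN /\ Tomega S tauN /\ equivS S tau tauN.
Proof.
move=> ringM sync1 t [_ [_ [_ [c Hc]]]].
have [s [w Hn]] := reach_normal (oriented_ring_dst_of_src ringM) sync1 Hc.
exists (sync_trace s ++ sends w); split; first by exists (sync_trace s), w; split=> //; exists s.
have HnT := Tomega_of_reach Hn.
by split=> //; split=> //; [exact: Tomega_of_reach Hc | exists c].
Qed.
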